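(* Let $\kappa$ be a cardinal with $\mathrm{cf}(\kappa) > \omega$, let $\mathcal{A}$ and $\mathcal{B}$ be almost disjoint families on $\omega$ of size $\kappa$, and let $h : \mathcal{A} \to \mathcal{B}$ be a bijection. Then for every $n \in \omega$ there are $x, y, z \in \mathcal{A}$ such that (1) $\max(x \cap y) > n$ and $x \cap y \subsetneq x \cap z$; and (2) $\max(h(x) \cap h(y)) > n$ and $h(x) \cap h(y) \subsetneq h(x) \cap h(z)$.
   Context: An almost disjoint (AD) family on $\omega$ is a family of infinite subsets of $\omega$ any two distinct members of which have finite intersection. *)

From HB Require Import structures.
From mathcomp Require Import all_boot all_order all_algebra.
From mathcomp Require Import boolp classical_sets functions cardinality.
Set Implicit Arguments. Unset Strict Implicit. Unset Printing Implicit Defensive.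
Local Open Scope classical_set_scope.
Local Open Scope card_scope.

Definition almost_disjoint (F : set (set nat)) : Prop :=
  (forall x, F x -> infinite_set x) /\
  (forall x y, F x -> F y -> x <> y -> finite_set (x `&` y)).

(* For an infinite
   cardinal kappa this is exactly cf(kappa) > omega (under AC). *)
Definition uncountable_cofinality (T : Type) (X : set T) : Prop :=
  ~ countable X /\
  (forall S : nat -> set T, (forall n, S n `<=` X) ->
     X = \bigcup_(n in [set: nat]) S n -> exists n, X #<= S n).

Definition max_gt (s : set nat) (n : nat) : Prop :=
  exists m, s m /\ (forall k, s k -> (k <= m)%N) /\ (n < m)%N.

From mathcomp Require Import all_boot all_order all_algebra.
From mathcomp Require Import boolp classical_sets functions cardinality.
Local Open Scope classical_set_scope.
Local Open Scope card_scope.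

(* Colour the members of A with countably many colours: since cf(|A|) > omega,
   some colour class still contains an injective copy of A.  Applying this three
   times, simultaneously to the sets x and h x, yields such a class C and y in C
   with: every x in C shares with y a fixed point above n; the finite trace
   x `&` y does not depend on x in C; and every x in C contains a fixed point
   outside y (all likewise for h x and h y).  Any two distinct x, z in C then
   form the required triple with y. *)

Lemma uncountable_card_le_infinite {T U : Type} {A : set T} {S : set U} :
  ~ countable A -> A #<= S -> infinite_set S.
Proof. by move=> Aunc AS /finite_set_countable/(sub_countable AS). Qed.

Lemma cofinality_pigeonhole {T : Type} {K : countType} {A P : set T}
    (R : T -> K -> Prop) :
  uncountable_cofinality A -> A #<= P -> (forall y, P y -> exists k, R y k) ->
  exists k, A #<= [set y | P y /\ R y k].
Proof.
elim/Ppointed: T => T in A P R *.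
  by rewrite emptyE_subdef => -[/(_ (countable0 _))].
move=> [Aunc Acof] /pcard_leP[f] PR.
have fAP : set_fun A P f by [].
pose S j := A `&` [set a | exists2 k, pickle k = j & R (f a) k].
have [j AS] : exists j, A #<= S j.
  apply: Acof => [j a []//|]; apply/seteqP; split=> [a Aa|a [j _ []//]].
  have [k Rk] := PR _ (fAP _ Aa).
  by exists (pickle k) => //; split=> //; exists k.
have /infinite_setN0[a0 [_ [k0 jk0 _]]] := uncountable_card_le_infinite Aunc AS.
exists k0; apply: (card_le_trans AS).
have SA : S j `<=` A by move=> a [].
rewrite -(card_le_eql (card_imsub f SA)).
apply: subset_card_le => _ [a [Aa [k jk Rk]] <-]; split; first exact: fAP.
by rewrite -(pcan_inj pickleK_inv (etrans jk (esym jk0))).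
Qed.

Lemma fin_all_exists_ffun {I : finType} {K : Type} {P : I -> K -> Prop} :
  (forall i, exists k, P i k) -> exists k : {ffun I -> K}, forall i, P i (k i).
Proof.
by move=> /fin_all_exists[k Pk]; exists (finfun k) => i; rewrite ffunE.
Qed.

Lemma cofinality_pigeonhole_ffun {T : Type} {I : finType} {K : countType}
    {A P : set T} (R : I -> T -> K -> Prop) :
  uncountable_cofinality A -> A #<= P ->
  (forall y, P y -> forall i, exists k, R i y k) ->
  exists k : {ffun I -> K}, A #<= [set y | P y /\ forall i, R i y (k i)].
Proof.
move=> cofA AP PR; apply: cofinality_pigeonhole => // y Py.
by have [k Rk] := fin_all_exists_ffun (PR y Py); exists k.
Qed.

Lemma infinite_nat_gt (s : set nat) n :
  infinite_set s -> exists m, s m /\ (n < m)%N.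
Proof.
move=> /infinite_setD/(_ (finite_II n.+1))/infinite_setN0[m [sm /negP]].
by rewrite -leqNgt => nm; exists m.
Qed.

Lemma max_gt_finite {s : set nat} {n m : nat} :
  finite_set s -> s m -> (n < m)%N -> max_gt s n.
Proof.
move=> /finite_seqP[l ->] lm nm.
have l_bounded k : k \in l -> (k <= \max_(i <- l) i)%N.
  by move=> lk; apply: (@leq_bigmax_seq _ l xpredT id).
have [M lM M_max] := ex_maxnP (ex_intro _ m lm) l_bounded.
by exists M; split=> //; split=> //; apply: leq_trans (M_max _ lm).
Qed.

Lemma setI_proper {T : Type} {x y z : set T} {b : T} :
  x `&` y `<=` z -> x b -> z b -> ~ y b -> x `&` y `<` x `&` z.
Proof.
move=> xyz xb zb nyb; split=> [t [xt yt]|xzxy]; first by split=> //; apply: xyz.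
by apply: nyb; have [] := xzxy b.
Qed.

Definition almost_disjoint_map {T : Type} (A : set T) (g : T -> set nat) :=
  (forall x, A x -> infinite_set (g x)) /\
  (forall x y, A x -> A y -> x <> y -> finite_set (g x `&` g y)).

Lemma almost_disjoint_map_inj {T : Type} (A : set T) (B : set (set nat))
    (g : T -> set nat) :
  almost_disjoint B -> set_fun A B g -> set_inj A g -> almost_disjoint_map A g.
Proof.
move=> [Binf Bfin] gAB ginj; split=> [x Ax|x y Ax Ay xy]; first exact/Binf/gAB.
apply: Bfin; [exact: gAB | exact: gAB | move=> gxy; apply: xy].
by apply: ginj; rewrite ?inE.
Qed.

Section AlmostDisjointMaps.
Context {T : Type} {I : finType} {A : set T} {g : I -> T -> set nat}.
Hypotheses (cofA : uncountable_cofinality A)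
  (adg : forall i, almost_disjoint_map A (g i)).

Lemma large_points_above n : exists k : {ffun I -> nat},
  A #<= [set y | A y /\ forall i, g i y (k i) /\ (n < k i)%N].
Proof.
apply: (cofinality_pigeonhole_ffun (fun i y m => g i y m /\ (n < m)%N)) => //.
move=> y Ay i.
exact/infinite_nat_gt/(adg i).1.
Qed.

Lemma large_common_meets {P : set T} y : P `<=` A -> A y -> A #<= P ->
  exists s : {ffun I -> seq nat}, A #<= [set x | P x /\
    x <> y /\ forall i, g i x `&` g i y = [set` s i]].
Proof.
move=> PA Ay AP.
(* The colour [None] is reserved for [y] itself: its class is too small. *)
pose R x (o : option {ffun I -> seq nat}) :=
  if o is Some s then x <> y /\ forall i, g i x `&` g i y = [set` s i]
  else x = y.
have PR x : P x -> exists o, R x o.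
  move=> Px; have [->|xy] := pselect (x = y); first by exists None.
  have xy_fin i : finite_set (g i x `&` g i y).
    by apply: (adg i).2 => //; exact: PA.
  have [s xys] := fin_all_exists_ffun (fun i => (finite_seqP _).1 (xy_fin i)).
  by exists (Some s).
have [[s|] AR] := cofinality_pigeonhole R cofA AP PR; first by exists s.
exfalso; apply: (uncountable_card_le_infinite cofA.1 AR).
by apply: (sub_finite_set _ (finite_set1 y)) => x [].
Qed.

Lemma large_points_outside {P : set T} y : P `<=` A -> A y ->
    (forall x, P x -> x <> y) -> A #<= P ->
  exists k : {ffun I -> nat},
    A #<= [set x | P x /\ forall i, g i x (k i) /\ ~ g i y (k i)].
Proof.
move=> PA Ay Pny AP.
apply: (cofinality_pigeonhole_ffun (fun i x m => g i x m /\ ~ g i y m)) => //.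
move=> x Px i; have Ax := PA _ Px.
have /infinite_setD := (adg i).1 _ Ax.
move=> /(_ _ ((adg i).2 _ _ Ax Ay (Pny _ Px)))/infinite_setN0[m [xm xym]].
by exists m; split=> // ym; apply: xym.
Qed.

Theorem almost_disjoint_maps_triple n : exists x y z, [/\ A x, A y, A z &
  forall i, max_gt (g i x `&` g i y) n /\ g i x `&` g i y `<` g i x `&` g i z].
Proof.
have [k1 AP1] := large_points_above n.
have /infinite_setN0[y [Ay P1y]] := uncountable_card_le_infinite cofA.1 AP1.
have [s AP2] := large_common_meets y (fun _ => @proj1 _ _) Ay AP1.
have [k3 AP3] := large_points_outside y (fun _ P2x => proj1 (proj1 P2x)) Ay
  (fun _ P2x => proj1 (proj2 P2x)) AP2.
have P3inf := uncountable_card_le_infinite cofA.1 AP3.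
have /infinite_setN0[x [[[Ax P1x] [xy xys]] x_out]] := P3inf.
have /infinite_setD/(_ (finite_set1 x))/infinite_setN0 := P3inf.
move=> [z [[[[Az _] [_ zys]] z_out] zx]].
exists x, y, z; split=> // i; split.
- apply: (max_gt_finite ((adg i).2 _ _ Ax Ay xy) _ (P1y i).2).
  by split; [exact: (P1x i).1 | exact: (P1y i).1].
- apply: (setI_proper _ (x_out i).1 (z_out i).1 (x_out i).2).
  by rewrite xys -zys => t [].
Qed.

End AlmostDisjointMaps.

Theorem lemma6 (A B : set (set nat)) (h : set nat -> set nat) :
  almost_disjoint A -> almost_disjoint B ->
  uncountable_cofinality A ->
  set_bij A B h ->
  forall n : nat, exists x y z : set nat,
    [/\ A x, A y, A z,
        max_gt (x `&` y) n /\ x `&` y `<` x `&` z &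
        max_gt (h x `&` h y) n /\ h x `&` h y `<` h x `&` h z].
Proof.
move=> adA adB cofA [hAB hinj _] n.
pose g (b : bool) := if b then id else h.
have adg b : almost_disjoint_map A (g b).
  case: b; last exact: almost_disjoint_map_inj adB hAB hinj.
  by apply: almost_disjoint_map_inj adA _ _ => // x y _ _.
have [x [y [z [Ax Ay Az gxyz]]]] := almost_disjoint_maps_triple cofA adg n.
by exists x, y, z; split; [| | | exact: gxyz true | exact: gxyz false].
Qed.
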